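(* Let $\mathscr T$ be a triangulation of $\Pi$ with $\mathscr T_{ijk}^{rst}\subseteq\mathscr T$ for some distinct $i,j,k\in[4]$ and $r,s,t\in\{-N,\dots,N\}$. Let $\mathscr T'$ be the result of a flip on $\mathscr T$ supported on a circuit $(X^+,X^-)$ of $\Pi$ with $X\neq X_{ijk}^{rst}$. Then $\mathscr T_{ijk}^{rst}\subseteq\mathscr T'$.
   Context: General conventions. For a finite point set $A\subset\mathbb R^d$: a cell is a subset of $A$; a simplex is an affinely independent cell; a face of a cell $C$ is a subset $F\subseteq C$ which is the set of minimizers on $C$ of some linear functional. A triangulation of $A$ is a collection $\mathscr T$ of simplices of $A$, closed under taking faces, such that for all $\sigma,\sigma'\in\mathscr T$, $\mathrm{conv}(\sigma)\cap\mathrm{conv}(\sigma')=\mathrm{conv}(F)$ for a common face $F$ of $\sigma$ and $\sigma'$, and such that $\bigcup_{\sigma\in\mathscr T}\mathrm{conv}(\sigma)=\mathrm{conv}(A)$. A circuit is a minimal affinely dependent subset $X$; it satisfies an affine dependence $\sum_{x\in X}\lambda_x x=0$, $\sum\lambda_x=0$, all $\lambda_x\neq0$, unique up to scaling, which partitions $X=X^+\cup X^-$ into the points with positive and with negative coefficients; writing $X=(X^+,X^-)$ fixes a choice of sign. Set $\mathscr T_X^+:=\{\sigma\subseteq X:X^+\not\subseteq\sigma\}$ and $\mathscr T_X^-:=\{\sigma\subseteq X:X^-\not\subseteq\sigma\}$. For $C\in\mathscr T$, $\mathrm{link}_{\mathscr T}(C):=\{C'\in\mathscr T: C\cap C'=\emptyset,\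 C\cup C'\in\mathscr T\}$. A triangulation $\mathscr T$ of $A$ has a flip supported on the circuit $(X^+,X^-)$, $X\subseteq A$, if $\mathscr T_X^+\subseteq\mathscr T$ and all inclusion-maximal elements of $\mathscr T_X^+$ have the same link $\mathscr L$ in $\mathscr T$; the result of the flip is the triangulation $(\mathscr T\setminus\{\rho\cup\sigma:\rho\in\mathscr L,\sigma\in\mathscr T_X^+\})\cup\{\rho\cup\sigma:\rho\in\mathscr L,\sigma\in\mathscr T_X^-\}$. The point set $\Pi$. Let $N\ge1$ and let $e_1,\dots,e_4$ be the standard basis of $\mathbb R^4$. For distinct $i,j\in[4]$ and integers $-N\le r\le N$ introduce symbols $f_{ij}^r$ with the identification $f_{ij}^r=f_{ji}^{-r}$; the distinct symbols $\{f_{ij}^r\}_{1\le i<j\le4,\,-N\le r\le N}$ form the standard basis of $\mathbb R^{6(2N+1)}$. Set $\Pi:=\bigcup_{1\le i<j\le4}\bigcup_{-N\le r\le N}\{(e_i,f_{ij}^r),(e_j,f_{ij}^r)\}$. For distinct $i,j,k\in[4]$ and $r,s,t\in\{-N,\dots,N\}$, $X_{ijk}^{rst}=((X_{ijk}^{rst})^+,(X_{ijk}^{rst})^-)$ is the circuit of $\Pi$ with affine dependence $(e_i,f_{ij}^r)-(e_j,f_{ij}^r)+(e_j,f_{jk}^s)-(e_k,f_{jk}^s)+(e_k,f_{ki}^t)-(e_i,f_{ki}^t)=0$, with $+$ and $-$ parts read off from these signs, and $\mathscr T_{ijk}^{rst}:=\mathscr T^+_{X_{ijk}^{rst}}$.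 *)

From HB Require Import structures.
From mathcomp Require Import all_boot all_order all_algebra.
Set Implicit Arguments. Unset Strict Implicit. Unset Printing Implicit Defensive.
Import Order.TTheory GRing.Theory Num.Theory.
Local Open Scope ring_scope.

(* General notions for a finite point set A = image of p : P -> R^C,  *)
(* P a finite index type of points, C a finite type of coordinates    *)

Definition lin (R : realFieldType) (C : finType) (w v : C -> R) : R :=
  \sum_(c : C) w c * v c.

Definition affine_dependence (R : realFieldType) (P C : finType)
  (p : P -> C -> R) (S : {set P}) (lam : P -> R) : Prop :=
  [/\ forall a, a \notin S -> lam a = 0,
      \sum_(a : P) lam a = 0 &
      forall c : C, \sum_(a : P) lam a * p a c = 0].

Definition aff_dep (R : realFieldType) (P C : finType)
  (p : P -> C -> R) (S : {set P}) : Prop :=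
  exists lam, affine_dependence p S lam /\ exists a, lam a != 0.

Definition is_simplex (R : realFieldType) (P C : finType)
  (p : P -> C -> R) (S : {set P}) : Prop := ~ aff_dep p S.

Definition in_conv (R : realFieldType) (P C : finType)
  (p : P -> C -> R) (S : {set P}) (x : C -> R) : Prop :=
  exists lam : P -> R,
    [/\ forall a, a \notin S -> lam a = 0,
        forall a, 0 <= lam a,
        \sum_(a : P) lam a = 1 &
        forall c : C, \sum_(a : P) lam a * p a c = x c].

Definition is_face (R : realFieldType) (P C : finType)
  (p : P -> C -> R) (F Cl : {set P}) : Prop :=
  F \subset Cl /\
  (F = set0 \/
   exists w : C -> R,
     F = [set a in Cl | [forall b in Cl, lin w (p a) <= lin w (p b)]]).

Definition is_triangulation (R : realFieldType) (P C : finType)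
  (p : P -> C -> R) (T : {set {set P}}) : Prop :=
  [/\ forall s, s \in T -> is_simplex p s,
      forall s F, s \in T -> is_face p F s -> F \in T,
      forall s s', s \in T -> s' \in T ->
        exists F, [/\ is_face p F s, is_face p F s' &
          forall x, (in_conv p s x /\ in_conv p s' x) <-> in_conv p F x] &
      forall x, in_conv p [set: P] x <-> exists2 s, s \in T & in_conv p s x].

Definition is_circuit (R : realFieldType) (P C : finType)
  (p : P -> C -> R) (X : {set P}) : Prop :=
  aff_dep p X /\ forall Y : {set P}, Y \proper X -> ~ aff_dep p Y.

Definition signed_circuit (R : realFieldType) (P C : finType)
  (p : P -> C -> R) (Xp Xm : {set P}) : Prop :=
  is_circuit p (Xp :|: Xm) /\
  exists lam, [/\ affine_dependence p (Xp :|: Xm) lam,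
                  forall a, a \in Xp -> 0 < lam a &
                  forall a, a \in Xm -> lam a < 0].

(* T_X^+ for X = (Xp, Xm); T_X^- is TX Xm Xp *)
Definition TX (P : finType) (Xp Xm : {set P}) : {set {set P}} :=
  [set s : {set P} | (s \subset Xp :|: Xm) && ~~ (Xp \subset s)].

Definition link (P : finType) (T : {set {set P}}) (Cl : {set P})
  : {set {set P}} :=
  [set C' in T | [disjoint Cl & C'] && (Cl :|: C' \in T)].

Definition maximal_in (P : finType) (S : {set {set P}}) (s : {set P}) : Prop :=
  s \in S /\ forall t, t \in S -> s \subset t -> t = s.

Definition flip_result (P : finType) (T : {set {set P}}) (Xp Xm : {set P})
  (L : {set {set P}}) : {set {set P}} :=
  (T :\: [set rho :|: s | rho in L, s in TX Xp Xm])
  :|: [set rho :|: s | rho in L, s in TX Xm Xp].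

Definition is_flip (R : realFieldType) (P C : finType) (p : P -> C -> R)
  (T : {set {set P}}) (Xp Xm : {set P}) (T' : {set {set P}}) : Prop :=
  [/\ signed_circuit p Xp Xm,
      TX Xp Xm \subset T &
      exists L, (forall s, maximal_in (TX Xp Xm) s -> link T s = L) /\
                T' = flip_result T Xp Xm L].

(* The point set Pi.  r in {-N..N} is encoded by r' : 'I_(2N+1) with   *)
(* r = r' - N; negation r |-> -r is rev_ord.                           *)
(* A point (a, b, r) with a != b denotes (e_a, f_{ab}^r); since        *)
(* f_{ab}^r = f_{ba}^{-r}, these are exactly the points of Pi, each    *)
(* once.  Coordinates: inl k = e_k coordinate, inr (i,j,r) with i < j  *)
(* = coordinate of the basis vector f_{ij}^r.                          *)

Definition PiPt (N : nat) : finType :=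
  {x : 'I_4 * 'I_4 * 'I_(2 * N).+1 | x.1.1 != x.1.2}.

Definition PiCoord (N : nat) : finType :=
  ('I_4 + {x : 'I_4 * 'I_4 * 'I_(2 * N).+1 | (x.1.1 < x.1.2)%N})%type.

Definition pi_pt (R : realFieldType) (N : nat) (x : PiPt N) : PiCoord N -> R :=
  let: (a, b, r) := val x in
  fun c => match c with
           | inl k => ((k == a) : nat)%:R
           | inr y => ((val y == (a, b, r)) || (val y == (b, a, rev_ord r)) : nat)%:R
           end.

Definition Xijk_plus (N : nat) (i j k : 'I_4) (r s t : 'I_(2 * N).+1)
  : {set PiPt N} :=
  [set x : PiPt N | val x \in [:: (i, j, r); (j, k, s); (k, i, t)]].

Definition Xijk_minus (N : nat) (i j k : 'I_4) (r s t : 'I_(2 * N).+1)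
  : {set PiPt N} :=
  [set x : PiPt N |
    val x \in [:: (j, i, rev_ord r); (k, j, rev_ord s); (i, k, rev_ord t)]].

Definition Tijk (N : nat) (i j k : 'I_4) (r s t : 'I_(2 * N).+1)
  : {set {set PiPt N}} :=
  TX (Xijk_plus i j k r s t) (Xijk_minus i j k r s t).

From HB Require Import structures.
From mathcomp Require Import all_boot all_order all_algebra.
Import Order.TTheory GRing.Theory Num.Theory.
Set Implicit Arguments. Unset Strict Implicit. Unset Printing Implicit Defensive.
Local Open Scope ring_scope.

(* A flip on (X^+, X^-) re-adds every removed cell rho :|: sigma with X^- not
   in sigma, so it only destroys cells containing X^-.  Cells of T_ijk^rst lie
   in X_ijk^rst, so it suffices that X^- inside X_ijk^rst forces X = X_ijk^rst.
   In an affine dependence on Pi, the two points (e_a, f) and (e_b, f) sharing a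
   coordinate f (twins) carry opposite coefficients; hence the twin of a positive
   point is negative, which puts X inside X_ijk^rst.  There the coordinates
   e_i, e_j, e_k make the coefficients alternate around the hexagon X_ijk^rst,
   so none of them vanishes and X is all of X_ijk^rst. *)

Lemma mem_flip_result (P : finType) (T : {set {set P}}) (Xp Xm : {set P})
    (L : {set {set P}}) (c : {set P}) :
  c \in T -> ~~ (Xm \subset c) -> c \in flip_result T Xp Xm L.
Proof.
move=> cT Xm_c; rewrite /flip_result in_setU in_setD cT andbT.
case: (boolP (c \in _)) => [/imset2P [rho sigma rhoL sigmaX c_eq] | //=].
apply/imset2P; exists rho sigma => //.
move: sigmaX Xm_c; rewrite /TX !inE setUC c_eq => /andP [-> _] /=.
by apply: contra => /subset_trans; apply; rewrite subsetUr.
Qed.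

Lemma big_support2 (M : nmodType) (I : finType) (F : I -> M) (u v : I) :
  u != v -> (forall z, z != u -> z != v -> F z = 0) ->
  \sum_z F z = F u + F v.
Proof.
move=> uv F0; rewrite (bigD1 u) //= (bigD1 v) 1?eq_sym //=.
by rewrite big1 ?addr0 // => z /andP [zu zv]; apply: F0.
Qed.

Section Twin.
Variable N : nat.
Implicit Types (z : PiPt N) (i j k : 'I_4) (r s t : 'I_(2 * N).+1).

(* (a, b, r) |-> (b, a, -r): the other point of Pi with coordinate f_ab^r. *)
Definition twin_label (u : 'I_4 * 'I_4 * 'I_(2 * N).+1) :=
  (u.1.2, u.1.1, rev_ord u.2).

Lemma twin_labelK : involutive twin_label.
Proof. by case=> [[a b] r]; rewrite /twin_label /= rev_ordK. Qed.

Lemma twin_label_neq z : twin_label (val z) != val z.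
Proof. by case: z => [[[a b] r] /= ab]; apply: contra ab => /eqP [->]. Qed.

Lemma twin_label_proper z : (twin_label (val z)).1.1 != (twin_label (val z)).1.2.
Proof. by rewrite eq_sym (valP z). Qed.

Definition twin z : PiPt N := exist _ (twin_label (val z)) (twin_label_proper z).

Lemma twinK : involutive twin.
Proof. by move=> z; apply: val_inj; rewrite /= twin_labelK. Qed.

Lemma mem_twin_Xijk_plus i j k r s t z :
  (twin z \in Xijk_plus i j k r s t) = (z \in Xijk_minus i j k r s t).
Proof.
rewrite !in_set /=; set xs := [:: (j, i, _); _; _].
have -> : [:: (i, j, r); (j, k, s); (k, i, t)] = map twin_label xs.
  by rewrite /= /twin_label /= !rev_ordK.
by rewrite mem_map //; apply: can_inj twin_labelK.
Qed.

Lemma mem_twin_Xijk_minus i j k r s t z :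
  (twin z \in Xijk_minus i j k r s t) = (z \in Xijk_plus i j k r s t).
Proof. by rewrite -mem_twin_Xijk_plus twinK. Qed.

Definition Xijk i j k r s t := Xijk_plus i j k r s t :|: Xijk_minus i j k r s t.

Lemma mem_twin_Xijk i j k r s t z :
  (twin z \in Xijk i j k r s t) = (z \in Xijk i j k r s t).
Proof. by rewrite !in_setU mem_twin_Xijk_plus mem_twin_Xijk_minus orbC. Qed.

Lemma Xijk_rot i j k r s t : Xijk j k i s t r = Xijk i j k r s t.
Proof. by apply/setP => z; rewrite !inE; do ! case: (_ == _). Qed.

End Twin.

Lemma pi_pt_inl (R : realFieldType) N (z : PiPt N) a :
  @pi_pt R N z (inl a) = (a == (val z).1.1)%:R.
Proof. by case: z => [[[? ?] ?] ?]. Qed.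

Lemma pi_pt_inr (R : realFieldType) N (z : PiPt N) y :
  @pi_pt R N z (inr y) = ((val z == val y) || (val z == twin_label (val y)))%:R.
Proof.
case: z => [[[a b] r] ab]; rewrite /pi_pt /= eq_sym; congr (_ || _)%:R.
by rewrite -(can_eq (@twin_labelK N)) /twin_label /= rev_ordK eq_sym.
Qed.

Section AffineDependence.
Variables (R : realFieldType) (N : nat) (lam : PiPt N -> R).
Hypothesis lam_coord : forall c, \sum_(a : PiPt N) lam a * @pi_pt R N a c = 0.

Lemma twin_dependence z : lam (twin z) = - lam z.
Proof.
have pair_sum (y : {u : 'I_4 * 'I_4 * 'I_(2 * N).+1 | (u.1.1 < u.1.2)%N}) x :
    val x = val y -> lam x + lam (twin x) = 0.
  move=> xy; have x_twin : x != twin x.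
    by apply: contra (twin_label_neq x) => /eqP {2}->.
  rewrite -(lam_coord (inr y)) (big_support2 x_twin).
    by rewrite !pi_pt_inr /= !xy !eqxx orbT !mulr1.
  move=> w wx wtx; rewrite pi_pt_inr -xy -[twin_label _]/(val (twin x)).
  by rewrite !(inj_eq val_inj) (negbTE wx) (negbTE wtx) mulr0.
apply/eqP; rewrite -addr_eq0 addrC; apply/eqP.
case: (ltngtP (val z).1.1 (val z).1.2) => [lt | gt | /val_inj eq].
- exact: (pair_sum (exist _ (val z) lt)).
- by rewrite addrC -{2}(twinK z); apply: (pair_sum (exist _ (val (twin z)) gt)).
- by have := valP z; rewrite /= eq eqxx.
Qed.

Lemma vertex_dependence i j k r s t (u w : PiPt N) :
  i != j -> j != k -> i != k ->
  (forall z, z \notin Xijk i j k r s t -> lam z = 0) ->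
  val u = (i, j, r) -> val w = (k, i, t) -> lam w = lam u.
Proof.
move=> ij jk ik supp uE wE.
have u_tw : u != twin w.
  by rewrite -(inj_eq val_inj) uE /= wE /twin_label /= !xpair_eqE (negbTE jk) andbF.
have := lam_coord (inl i); rewrite (big_support2 u_tw).
  rewrite !pi_pt_inl uE /= wE /= eqxx !mulr1 twin_dependence.
  by move/eqP; rewrite subr_eq0 => /eqP.
move=> z zu ztw; case: (boolP (z \in Xijk i j k r s t)) => zX; last first.
  by rewrite supp // mul0r.
suff : [\/ val z = val u, val z = val (twin w) | (val z).1.1 != i].
  case=> [/val_inj zuE | /val_inj ztwE | zi]; first by rewrite zuE eqxx in zu.
    by rewrite ztwE eqxx in ztw.
  by rewrite pi_pt_inl eq_sym (negbTE zi) mulr0.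
move: zX; rewrite !inE uE /= wE /twin_label /= -!orbA.
by do ![case/orP=> [/eqP-> |]]; last move/eqP->;
  by [apply: Or31 | apply: Or32 | apply: Or33; rewrite /= eq_sym].
Qed.

Lemma dependence_Xijk i j k r s t (u : PiPt N) :
  i != j -> j != k -> i != k ->
  (forall z, z \notin Xijk i j k r s t -> lam z = 0) -> val u = (i, j, r) ->
  forall z, z \in Xijk i j k r s t -> lam z = lam u \/ lam z = - lam u.
Proof.
move=> ij jk ik supp uE.
have lam_plus z : z \in Xijk_plus i j k r s t -> lam z = lam u.
  rewrite !inE => /or3P [/eqP zE | /eqP zE | /eqP zE].
  - by rewrite (_ : z = u) //; apply: val_inj; rewrite zE uE.
  - rewrite -Xijk_rot in supp; symmetry.
    by apply: (vertex_dependence _ _ _ supp zE uE); rewrite // eq_sym.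
  - exact: (vertex_dependence ij jk ik supp uE zE).
move=> z; rewrite in_setU => /orP [/lam_plus -> | zm]; [by left | right].
by rewrite -[z]twinK twin_dependence lam_plus // mem_twin_Xijk_plus.
Qed.

End AffineDependence.

Lemma signed_circuit_Xijk (R : realFieldType) N i j k r s t (Xp Xm : {set PiPt N}) :
  i != j -> j != k -> i != k -> signed_circuit (@pi_pt R N) Xp Xm ->
  Xm \subset Xijk i j k r s t -> Xp :|: Xm = Xijk i j k r s t.
Proof.
move=> ij jk ik [[[lam0 [[lam0_supp _ _] [a lam0a]]] _] [lam [[supp _ coord] pos neg]]].
move=> XmY.
have lam_nz z : z \in Xp :|: Xm -> lam z != 0.
  by rewrite in_setU => /orP [/pos/gt_eqF | /neg/lt_eqF] ->.
have XY : Xp :|: Xm \subset Xijk i j k r s t.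
  apply/subsetP => z; rewrite in_setU => /orP [zp | /(subsetP XmY) //].
  rewrite -mem_twin_Xijk; apply: (subsetP XmY).
  have tz_neg : lam (twin z) < 0 by rewrite twin_dependence // oppr_lt0 pos.
  have : twin z \in Xp :|: Xm.
    by apply: contraT => /supp tz0; rewrite tz0 ltxx in tz_neg.
  by rewrite in_setU => /orP [/pos/lt_trans/(_ tz_neg) | //]; rewrite ltxx.
have suppY z : z \notin Xijk i j k r s t -> lam z = 0.
  by move=> zY; apply: supp; apply: contra zY; apply: (subsetP XY).
have aX : a \in Xp :|: Xm.
  by apply: contraT => /lam0_supp a0; rewrite a0 eqxx in lam0a.
pose u : PiPt N := exist _ (i, j, r) ij.
have lam_of_Xijk := dependence_Xijk coord ij jk ik suppY (u := u) erefl.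
have lam_u : lam u != 0.
  by have := lam_nz a aX; case: (lam_of_Xijk a (subsetP XY a aX)) => ->;
    rewrite ?oppr_eq0.
apply/eqP; rewrite eqEsubset XY; apply/subsetP => z zY; apply: contraT => /supp z0.
by case: (lam_of_Xijk z zY) => /eqP; rewrite z0 eq_sym ?oppr_eq0 (negbTE lam_u).
Qed.

Theorem proposition4p6 (R : realFieldType) (N : nat) (HN : (0 < N)%N)
  (T T' : {set {set PiPt N}}) (i j k : 'I_4) (r s t : 'I_(2 * N).+1)
  (Xp Xm : {set PiPt N}) :
  i != j -> j != k -> i != k ->
  is_triangulation (@pi_pt R N) T ->
  Tijk i j k r s t \subset T ->
  is_flip (@pi_pt R N) T Xp Xm T' ->
  Xp :|: Xm != Xijk_plus i j k r s t :|: Xijk_minus i j k r s t ->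
  Tijk i j k r s t \subset T'.
Proof.
move=> ij jk ik _ TijkT [Xcirc _ [L [_ ->]]] XneY.
apply/subsetP => c cTijk; apply: mem_flip_result; first exact: (subsetP TijkT).
apply: contra XneY => Xm_c; apply/eqP; apply: (signed_circuit_Xijk ij jk ik Xcirc).
by apply: subset_trans Xm_c _; move: cTijk; rewrite inE => /andP [].
Qed.
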